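(* Let $\mathcal{G} = (\mathcal{V}, \mathcal{E})$ be a graph and $(i,j) \in \mathcal{V} \times \mathcal{V}$ a pair of nodes of $\mathcal{G}$. Then there exist a graph $\mathcal{G}' = (\mathcal{V}', \mathcal{E}')$ not isomorphic to $\mathcal{G}$ and a pair of nodes $(i',j') \in \mathcal{V}' \times \mathcal{V}'$ such that $(P_k)_{ij} = (P'_k)_{i'j'}$ for all integers $k \geq 1$, where $P_k$ and $P'_k$ are the $k$-hop random walk matrices of $\mathcal{G}$ and $\mathcal{G}'$ respectively.
   Context: Graphs are finite and undirected, and every node has positive degree so that the random walk matrix is defined. For a graph with adjacency matrix $A$ (with $A_{ij}=1$ if $i,j$ are adjacent and $0$ otherwise) and diagonal degree matrix $D$ (with $D_{ii} = \sum_j A_{ij}$), the $k$-hop random walk matrix is $P_k = (D^{-1}A)^k$; its $(i,j)$ entry is the probability that a simple random walk of length $k$ started at $i$ ends at $j$. The graphs $\mathcal{G}$ and $\mathcal{G}'$ need not have the same number of nodes. *)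

From mathcomp Require Import all_boot all_order all_algebra.
Set Implicit Arguments. Unset Strict Implicit. Unset Printing Implicit Defensive.
Import Order.TTheory GRing.Theory Num.Theory.
Local Open Scope ring_scope.

Definition undirected_graph (V : finType) (e : rel V) : Prop :=
  symmetric e /\ irreflexive e.

Definition no_isolated (V : finType) (e : rel V) : Prop :=
  forall x : V, exists y : V, e x y.

Definition adj_mx (V : finType) (e : rel V) : 'M[rat]_#|V| :=
  \matrix_(i, j) (e (enum_val i) (enum_val j))%:R.

Definition deg_mx (V : finType) (e : rel V) : 'M[rat]_#|V| :=
  diag_mx (\row_i (\sum_j adj_mx e i j)).

Definition rw_mx (V : finType) (e : rel V) (k : nat) : 'M[rat]_#|V| :=
  (invmx (deg_mx e) *m adj_mx e) ^+ k.

Definition rw_prob (V : finType) (e : rel V) (k : nat) (i j : V) : rat :=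
  rw_mx e k (enum_rank i) (enum_rank j).

Definition graph_iso (V V' : finType) (e : rel V) (e' : rel V') : Prop :=
  exists f : V -> V', bijective f /\ forall x y, e' (f x) (f y) = e x y.

(* Add a disjoint edge to the graph.  A random walk started in the old graph
   never leaves it and sees the same degrees there, so every entry of every
   P_k between old vertices is unchanged; the new graph has two more vertices,
   so it is not isomorphic to the old one. *)
From mathcomp Require Import all_boot all_order all_algebra.
Set Implicit Arguments. Unset Strict Implicit. Unset Printing Implicit Defensive.
Import Order.TTheory GRing.Theory Num.Theory.
Local Open Scope ring_scope.

Lemma sum_enum_rank (V : finType) (F : 'I_#|V| -> rat) :
  \sum_(a : 'I_#|V|) F a = \sum_(z : V) F (enum_rank z).
Proof. exact: (reindex enum_rank (onW_bij _ (enum_rank_bij V))). Qed.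

Section RandomWalk.

Variables (V : finType) (e : rel V).

Definition vertex_degree (x : V) : rat := \sum_(z : V) (e x z)%:R.

Lemma vertex_degree_gt0 x : no_isolated e -> 0 < vertex_degree x.
Proof.
move=> noiso; have [y exy] := noiso x.
rewrite /vertex_degree (bigD1 y) //= exy ltr_pwDl ?ltr01 //.
by apply: sumr_ge0 => z _; rewrite ler0n.
Qed.

Lemma row_sum_adj_mx (a : 'I_#|V|) :
  \sum_b adj_mx e a b = vertex_degree (enum_val a).
Proof. by rewrite sum_enum_rank; apply: eq_bigr => z _; rewrite mxE enum_rankK. Qed.

Lemma transition_mxE : no_isolated e ->
  invmx (deg_mx e) *m adj_mx e =
  \matrix_(a, b) (adj_mx e a b / vertex_degree (enum_val a)).
Proof.
move=> noiso; set P := \matrix_(a, b) _.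
have DP : deg_mx e *m P = adj_mx e.
  apply/matrixP => a b; rewrite mul_diag_mx !mxE row_sum_adj_mx.
  by rewrite mulrC -mulrA mulVf ?mulr1 // gt_eqF // vertex_degree_gt0.
have D_unit : deg_mx e \in unitmx.
  rewrite unitmxE det_diag unitfE; apply/prodf_neq0 => a _.
  by rewrite mxE row_sum_adj_mx gt_eqF // vertex_degree_gt0.
by rewrite -DP mulmxA mulVmx // mul1mx.
Qed.

Lemma rw_prob0 x y : rw_prob e 0 x y = (x == y)%:R.
Proof. by rewrite /rw_prob /rw_mx expr0 mxE (inj_eq enum_rank_inj). Qed.

Lemma rw_probS k x y : no_isolated e ->
  rw_prob e k.+1 x y =
  \sum_(z : V) (e x z)%:R / vertex_degree x * rw_prob e k z y.
Proof.
move=> noiso; rewrite /rw_prob /rw_mx exprS -mulmxE transition_mxE // mxE.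
by rewrite sum_enum_rank; apply: eq_bigr => z _; rewrite !mxE !enum_rankK.
Qed.

End RandomWalk.

Lemma graph_iso_card (V V' : finType) (e : rel V) (e' : rel V') :
  graph_iso e e' -> #|V| = #|V'|.
Proof. by move=> [f [/bij_eq_card]]. Qed.

Section DisjointUnion.

Variables (V1 V2 : finType) (e1 : rel V1) (e2 : rel V2).

Definition sum_rel : rel (V1 + V2) :=
  fun u v => match u, v with
  | inl a, inl b => e1 a b
  | inr a, inr b => e2 a b
  | _, _ => false
  end.

Lemma undirected_sum_rel :
  undirected_graph e1 -> undirected_graph e2 -> undirected_graph sum_rel.
Proof.
move=> [sym1 irr1] [sym2 irr2]; split.
- by case=> [a|a] [b|b] //=; rewrite ?sym1 ?sym2.
- by case=> [a|a] /=; rewrite ?irr1 ?irr2.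
Qed.

Lemma no_isolated_sum_rel :
  no_isolated e1 -> no_isolated e2 -> no_isolated sum_rel.
Proof.
move=> noiso1 noiso2 [a|a].
- by have [b eab] := noiso1 a; exists (inl b).
- by have [b eab] := noiso2 a; exists (inr b).
Qed.

Lemma vertex_degree_sum_rel_inl x :
  vertex_degree sum_rel (inl x) = vertex_degree e1 x.
Proof. by rewrite /vertex_degree big_sumType /= [X in _ + X]big1 ?addr0. Qed.

Lemma rw_prob_sum_rel_inl k x y :
  no_isolated e1 -> no_isolated e2 ->
  rw_prob sum_rel k (inl x) (inl y) = rw_prob e1 k x y.
Proof.
move=> noiso1 noiso2; have noiso := no_isolated_sum_rel noiso1 noiso2.
elim: k x => [|k IHk] x; first by rewrite !rw_prob0.
rewrite !rw_probS // big_sumType /= [X in _ + X]big1 => [|z _]; last by rewrite !mul0r.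
rewrite addr0 vertex_degree_sum_rel_inl.
by apply: eq_bigr => z _; rewrite IHk.
Qed.

End DisjointUnion.

Definition edge_rel : rel bool := fun a b => a != b.

Lemma undirected_edge_rel : undirected_graph edge_rel.
Proof. by split=> [a b|a]; rewrite /edge_rel ?eqxx // eq_sym. Qed.

Lemma no_isolated_edge_rel : no_isolated edge_rel.
Proof. by move=> a; exists (~~ a); case: a. Qed.

Theorem proposition2 (V : finType) (e : rel V) (i j : V) :
  undirected_graph e -> no_isolated e ->
  exists (V' : finType) (e' : rel V') (i' j' : V'),
    [/\ undirected_graph e', no_isolated e', ~ graph_iso e e' &
        forall k : nat, (1 <= k)%N -> rw_prob e k i j = rw_prob e' k i' j'].
Proof.
move=> undir noiso.
exists (V + bool)%type, (sum_rel e edge_rel), (inl i), (inl j); split.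
- exact: undirected_sum_rel undir undirected_edge_rel.
- exact: no_isolated_sum_rel noiso no_isolated_edge_rel.
- move=> /graph_iso_card; rewrite card_sum card_bool => /eqP.
  by rewrite -{1}[#|V|]addn0 eqn_add2l.
- by move=> k _; rewrite rw_prob_sum_rel_inl //; exact: no_isolated_edge_rel.
Qed.
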